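(* Let $G=(X,\Sigma,\longrightarrow,X_0)$ and $R=(Z,\Sigma,\longrightarrow,Z_0)$ be automata, with $\Sigma=\Sigma_{uc}\cup\Sigma_c$ (disjoint) and required events $\Sigma_r\subseteq\Sigma$. There exists a $\Sigma_{uc}$-admissible (w.r.t. $G$) supervisor $S$ such that $S\|G\sqsubseteq_{cc}R$ if and only if there exists a $\Sigma_{ucr}$-controllability set from $G$ to $R$.
   Context: An automaton is a 4-tuple $A=(Q,\Sigma,\longrightarrow,Q_0)$ where $Q$ is a set of states, $\Sigma$ a finite set of events, ${\longrightarrow}\subseteq Q\times\Sigma\times Q$, and $\emptyset\neq Q_0\subseteq Q$ is the set of initial states. Write $q\xrightarrow{\sigma}q'$ for $(q,\sigma,q')\in{\longrightarrow}$ and $q\xrightarrow{\sigma}$ if $q\xrightarrow{\sigma}q'$ for some $q'$; the relation extends to strings $s\in\Sigma^*$ as usual. A state $q$ is reachable if $q_0\xrightarrow{s}q$ for some $q_0\in Q_0$, $s\in\Sigma^*$. A supervisor is an automaton $S=(Y,\Sigma,\longrightarrow,Y_0)$. The events are partitioned into uncontrollable events $\Sigma_{uc}$ and controllable events $\Sigma_c$, and $\Sigma_r\subseteq\Sigma$ is a fixed set of required events. The synchronous composition is $S\|G=(Y\times X,\Sigma,\longrightarrow,Y_0\times X_0)$ with $(y,x)\xrightarrow{\sigma}(y',x')$ iff $y\xrightarrow{\sigma}y'$ and $x\xrightarrow{\sigma}x'$. $S$ is $\Sigma_{uc}$-admissible w.r.t. $G$ if for every reachable state $(y,x)$ of $S\|G$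 and every $\sigma\in\Sigma_{uc}$, $x\xrightarrow{\sigma}$ implies $(y,x)\xrightarrow{\sigma}$. For automata $A_1=(Q_1,\Sigma,\longrightarrow,Q_{01})$, $A_2=(Q_2,\Sigma,\longrightarrow,Q_{02})$, a relation $\Phi\subseteq Q_1\times Q_2$ is a cc-simulation if: (initial state) every $q_0\in Q_{01}$ has some $p_0\in Q_{02}$ with $(q_0,p_0)\in\Phi$; (forward) for all $(q,p)\in\Phi$, $\sigma\in\Sigma$ and $q\xrightarrow{\sigma}q'$ there is $p'$ with $p\xrightarrow{\sigma}p'$ and $(q',p')\in\Phi$; ($\Sigma_r$-backward) for all $(q,p)\in\Phi$, $\sigma\in\Sigma_r$ and $p\xrightarrow{\sigma}p'$ there is $q'$ with $q\xrightarrow{\sigma}q'$ and $(q',p')\in\Phi$. $A_1\sqsubseteq_{cc}A_2$ means such a $\Phi$ exists. For $W,W'\subseteq X\times Z$ and $\sigma\in\Sigma$, $\mathit{match}_{G,R}(W,\sigma,W')$ holds iff for all $(x,z)\in W$ and all $x'$ with $x\xrightarrow{\sigma}x'$ there exists $z'$ with $z\xrightarrow{\sigma}z'$ and $(x',z')\in W'$. A set $E\subseteq\wp(X\times Z)$ is a $\Sigma_{ucr}$-controllability set from $G$ to $R$ if: (istate) there is $W_0\in E$ such that every $x_0\in X_0$ has some $z_0\in Z_0$ with $(x_0,z_0)\in W_0$; (a) for every $W\in E$ and $\sigma\in\Sigma_{uc}$ there is $W'\in E$ with $\mathit{match}_{G,R}(W,\sigma,W')$; (b) for every $W\in E$, $(x,z)\in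 W$, $\sigma\in\Sigma_r$ and $z'\in Z$ with $z\xrightarrow{\sigma}z'$, there exist $x'\in X$ and $W'\in E$ with $x\xrightarrow{\sigma}x'$, $(x',z')\in W'$ and $\mathit{match}_{G,R}(W,\sigma,W')$. *)

From mathcomp Require Import all_boot.
Set Implicit Arguments. Unset Strict Implicit. Unset Printing Implicit Defensive.

Record automaton (Sigma : Type) := Automaton {
  st : Type;
  tr : st -> Sigma -> st -> Prop;
  init : st -> Prop;
  init_ne : exists q, init q
}.
Arguments st {Sigma} a.
Arguments tr {Sigma} a _ _ _.
Arguments init {Sigma} a _.

Inductive tr_star {Sigma} (A : automaton Sigma) : st A -> seq Sigma -> st A -> Prop :=
| tr_star_nil (q : st A) : tr_star q [::] q
| tr_star_cons (q : st A) (a : Sigma) (q' : st A) (s : seq Sigma) (q'' : st A) :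
    tr A q a q' -> tr_star q' s q'' -> tr_star q (a :: s) q''.

Definition reachable {Sigma} (A : automaton Sigma) (q : st A) : Prop :=
  exists q0 s, init A q0 /\ @tr_star Sigma A q0 s q.

Arguments reachable {Sigma} A q.

Lemma sync_init_ne {Sigma} (S G : automaton Sigma) :
  exists p : st S * st G, init S p.1 /\ init G p.2.
Proof.
case: (init_ne S) => y Hy; case: (init_ne G) => x Hx.
by exists (y, x).
Qed.

Definition sync {Sigma} (S G : automaton Sigma) : automaton Sigma :=
  @Automaton Sigma (st S * st G)%type
    (fun p a p' => tr S p.1 a p'.1 /\ tr G p.2 a p'.2)
    (fun p => init S p.1 /\ init G p.2)
    (sync_init_ne S G).

Section Defs.
Variable Sigma : finType.
Variables (uc r : {pred Sigma}). (* uncontrollable events; required events.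
                                    Controllable events are the complement of uc. *)

Definition admissible (S G : automaton Sigma) : Prop :=
  forall (y : st S) (x : st G), reachable (sync S G) (y, x) ->
  forall a, a \in uc -> (exists x', tr G x a x') ->
  exists p', tr (sync S G) (y, x) a p'.

Definition cc_sim (A1 A2 : automaton Sigma) (Phi : st A1 -> st A2 -> Prop) : Prop :=
  [/\ (forall q0, init A1 q0 -> exists p0, init A2 p0 /\ Phi q0 p0),
      (forall q p, Phi q p -> forall a q', tr A1 q a q' ->
         exists p', tr A2 p a p' /\ Phi q' p')
    & (forall q p, Phi q p -> forall a, a \in r -> forall p', tr A2 p a p' ->
         exists q', tr A1 q a q' /\ Phi q' p')].

Arguments cc_sim : clear implicits.

Definition cc_le (A1 A2 : automaton Sigma) : Prop :=
  exists Phi, cc_sim A1 A2 Phi.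

Definition match_GR (G R : automaton Sigma) (W : st G -> st R -> Prop) (a : Sigma)
  (W' : st G -> st R -> Prop) : Prop :=
  forall x z, W x z -> forall x', tr G x a x' -> exists z', tr R z a z' /\ W' x' z'.

Definition ctrl_set (G R : automaton Sigma)
  (E : (st G -> st R -> Prop) -> Prop) : Prop :=
  [/\ (exists W0, E W0 /\ forall x0, init G x0 -> exists z0, init R z0 /\ W0 x0 z0),
      (forall W, E W -> forall a, a \in uc -> exists W', E W' /\ @match_GR G R W a W')
    & (forall W, E W -> forall x z, W x z -> forall a, a \in r -> forall z', tr R z a z' ->
         exists x' W', [/\ tr G x a x', E W', W' x' z' & @match_GR G R W a W'])].
End Defs.
Arguments ctrl_set : clear implicits.
Arguments admissible : clear implicits.
Arguments cc_le : clear implicits.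
Arguments match_GR : clear implicits.

From mathcomp Require Import all_boot.
From Stdlib Require Import Classical.
Set Implicit Arguments. Unset Strict Implicit.

(* A supervisor state y is summarised by the set of pairs (x, z) such that
   (y, x) is reachable in S || G and cc-simulated by z; the sets obtained this
   way form a controllability set, the supervisor's own moves witnessing the
   [match] conditions.  Conversely, the members of a controllability set can be
   used as supervisor states, moving from W to W' on a whenever
   match(W, a, W'), and ((W, x), z) |-> (x, z) \in W is a cc-simulation. *)

Lemma tr_star_rcons {Sigma} (A : automaton Sigma) q s q1 a q2 :
  tr_star (A:=A) q s q1 -> tr A q1 a q2 -> tr_star (A:=A) q (rcons s a) q2.
Proof.
elim=> [p|p b p' s' p'' Hb _ IH] Ha /=.
  exact: tr_star_cons Ha (tr_star_nil _).
exact: tr_star_cons Hb (IH Ha).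
Qed.

Lemma reachable_tr {Sigma} (A : automaton Sigma) q a q' :
  reachable A q -> tr A q a q' -> reachable A q'.
Proof.
move=> [q0 [s [Hq0 Hs]]] Ht; exists q0, (rcons s a); split=> //.
exact: tr_star_rcons Hs Ht.
Qed.

Section Necessity.
Variables (Sigma : finType) (uc r : {pred Sigma}).
Variables (S G R : automaton Sigma) (Phi : st (sync S G) -> st R -> Prop).
Hypothesis S_admissible : admissible Sigma uc S G.
Hypothesis Phi_sim : @cc_sim Sigma r (sync S G) R Phi.

Definition reach_slice (y : st S) (x : st G) (z : st R) : Prop :=
  reachable (sync S G) (y, x) /\ Phi (y, x) z.

Lemma reach_slice_init y x z :
  init S y -> init G x -> Phi (y, x) z -> reach_slice y x z.
Proof.
move=> Hy Hx HPhi; split=> //.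
by exists (y, x), [::]; split; last exact: tr_star_nil.
Qed.

Lemma match_reach_slice y a y' :
  tr S y a y' -> match_GR Sigma G R (reach_slice y) a (reach_slice y').
Proof.
case: Phi_sim => _ Phi_fwd _ Hy x z [Hreach HPhi] x' Hx.
have Hsync : tr (sync S G) (y, x) a (y', x') by [].
have [z' [Hz HPhi']] := Phi_fwd _ _ HPhi a _ Hsync.
by exists z'; split=> //; split=> //; exact: reachable_tr Hreach Hsync.
Qed.

Lemma ctrl_set_reach_slices :
  ctrl_set Sigma uc r G R (fun W => exists y, W = reach_slice y).
Proof.
case: Phi_sim => Phi_init _ Phi_bwd; split.
- have [y0 Hy0] := init_ne S.
  exists (reach_slice y0); split; first by exists y0.
  move=> x0 Hx0; have [z0 [Hz0 HPhi]] := Phi_init (y0, x0) (conj Hy0 Hx0).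
  by exists z0; split=> //; exact: reach_slice_init.
- move=> _ [y ->] a Hauc.
  case: (classic (exists x z x', reach_slice y x z /\ tr G x a x')).
  + move=> [x [z [x' [[Hreach _] Hx]]]].
    have [[y' x''] [Hy _]] := S_admissible Hreach Hauc (ex_intro _ x' Hx).
    by exists (reach_slice y'); split; [exists y' | exact: match_reach_slice].
  + move=> Hstuck; exists (reach_slice y); split; first by exists y.
    by move=> x z Hxz x' Hx; case: Hstuck; exists x, z, x'.
- move=> _ [y ->] x z [Hreach HPhi] a Har z' Hz.
  have [[y' x'] [[Hy Hx] HPhi']] := Phi_bwd _ _ HPhi a Har z' Hz.
  exists x', (reach_slice y'); split=> //; first by exists y'.
  + by split=> //; exact: reachable_tr Hreach (conj Hy Hx).
  + exact: match_reach_slice.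
Qed.

End Necessity.

Section Sufficiency.
Variables (Sigma : finType) (uc r : {pred Sigma}) (G R : automaton Sigma).
Variable E : (st G -> st R -> Prop) -> Prop.
Hypothesis E_ctrl : ctrl_set Sigma uc r G R E.

Definition covers_init (W : st G -> st R -> Prop) : Prop :=
  forall x0, init G x0 -> exists z0, init R z0 /\ W x0 z0.

Lemma ctrl_set_covers_init : exists W : {W | E W}, covers_init (sval W).
Proof. by case: E_ctrl => [[W0 [HW0 Hcov]] _ _]; exists (exist _ W0 HW0). Qed.

Definition ctrl_supervisor : automaton Sigma :=
  @Automaton Sigma {W | E W}
    (fun W a W' => match_GR Sigma G R (sval W) a (sval W'))
    (fun W => covers_init (sval W)) ctrl_set_covers_init.

Lemma ctrl_supervisor_admissible : admissible Sigma uc ctrl_supervisor G.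
Proof.
case: E_ctrl => _ E_uc _ [W HW] x _ a Hauc [x' Hx].
have [W' [HW' Hmatch]] := E_uc W HW a Hauc.
by exists (exist _ W' HW', x').
Qed.

Lemma ctrl_supervisor_cc_sim :
  @cc_sim Sigma r (sync ctrl_supervisor G) R (fun p z => sval p.1 p.2 z).
Proof.
case: E_ctrl => _ _ E_r; split.
- by move=> [W x] [/= Hcov Hx]; exact: Hcov.
- by move=> [W x] z /= Hxz a [W' x'] [/= Hmatch Hx]; exact: Hmatch Hxz _ Hx.
- move=> [[W HW] x] z /= Hxz a Har z' Hz.
  have [x' [W' [Hx HW' Hxz' Hmatch]]] := E_r W HW x z Hxz a Har z' Hz.
  by exists (exist _ W' HW', x').
Qed.

End Sufficiency.

Theorem theorem1 (Sigma : finType) (uc r : {pred Sigma}) (G R : automaton Sigma) :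
  (exists S : automaton Sigma, admissible Sigma uc S G /\ cc_le Sigma r (sync S G) R) <->
  (exists E, ctrl_set Sigma uc r G R E).
Proof.
split.
- move=> [S [S_adm [Phi Phi_sim]]].
  by eexists; exact: ctrl_set_reach_slices S_adm Phi_sim.
- move=> [E E_ctrl]; exists (ctrl_supervisor E_ctrl); split.
  + exact: ctrl_supervisor_admissible.
  + by eexists; exact: ctrl_supervisor_cc_sim.
Qed.
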